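(* Let $\mathbb K$ be an infinite field, $\mathcal M,\mathcal N$ vector spaces over $\mathbb K$, and $f:\mathcal M_{\mathrm{nc}}\to\mathcal N_{\mathrm{nc}}$ a nc function which is polynomial on slices, with $f|_{\mathcal M^{n\times n}}$ polynomial on slices of degree $L_n$. Assume that the degrees $L_n$, $n=1,2,\dots$, are bounded. Then $f$ is a nc polynomial over $\mathcal M$ with coefficients in $\mathcal N$: there exist $L\in\mathbb N$ and $\ell$-linear mappings $p_\ell:\mathcal M^\ell\to\mathcal N$, $\ell=0,\dots,L$, such that $f(X)=\sum_{\ell=0}^LX^{\odot\ell}p_\ell$ for all $n$ and all $X\in\mathcal M^{n\times n}$.
   Context: $\mathcal M_{\mathrm{nc}}=\coprod_n\mathcal M^{n\times n}$; matrices over $\mathbb K$ act on matrices over $\mathcal M,\mathcal N$ by matrix multiplication. A nc function $f:\mathcal M_{\mathrm{nc}}\to\mathcal N_{\mathrm{nc}}$ satisfies $f(\mathcal M^{n\times n})\subseteq\mathcal N^{n\times n}$, $f(X\oplus Y)=f(X)\oplus f(Y)$ where $X\oplus Y=\begin{bmatrix}X&0\\0&Y\end{bmatrix}$, and $f(SXS^{-1})=Sf(X)S^{-1}$ for invertible $S\in\mathbb K^{n\times n}$. $f|_{\mathcal M^{n\times n}}$ is polynomial on slices of degree $L_n$ if for all $Y,Z\in\mathcal M^{n\times n}$, $t\mapsto f(Y+tZ)$ ($t\in\mathbb K$) is a polynomial in $t$ with coefficients in $\mathcal N^{n\times n}$ of degree at most $L_n$, with equality for some $Y,Z$; $f$ is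 polynomial on slices if this holds for every $n$ with some $L_n$. For $X=[X_{ij}]\in\mathcal M^{n\times n}$, $X^{\odot\ell}$ is the $n\times n$ matrix over $\mathcal M^{\otimes\ell}$ with $(i,k)$ entry $\sum_{j_1,\dots,j_{\ell-1}}X_{ij_1}\otimes\cdots\otimes X_{j_{\ell-1}k}$, and $X^{\odot\ell}p_\ell\in\mathcal N^{n\times n}$ applies the linear map $\mathcal M^{\otimes\ell}\to\mathcal N$ induced by $p_\ell$ entrywise; $X^{\odot0}p_0=I_np_0$ for $p_0\in\mathcal N$. *)

From HB Require Import structures.
From mathcomp Require Import all_boot all_order all_algebra.
Set Implicit Arguments. Unset Strict Implicit. Unset Printing Implicit Defensive.
Import Order.TTheory GRing.Theory Num.Theory.
Local Open Scope ring_scope.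

Section NC.
Variables (K : fieldType) (M N : lmodType K).

Definition lactmx n (S : 'M[K]_n) (X : 'M[M]_n) : 'M[M]_n :=
  \matrix_(i, j) \sum_(k < n) S i k *: X k j.

Definition ractmx n (X : 'M[M]_n) (S : 'M[K]_n) : 'M[M]_n :=
  \matrix_(i, j) \sum_(k < n) S k j *: X i k.

Definition scalemx m n (t : K) (X : 'M[M]_(m, n)) : 'M[M]_(m, n) :=
  map_mx (fun x => t *: x) X.

Definition multilinear (l : nat) (p : {ffun 'I_l -> M} -> N) : Prop :=
  forall (i : 'I_l) (v : {ffun 'I_l -> M}) (a : K) (x y : M),
    p [ffun j => if j == i then a *: x + y else v j]
    = a *: p [ffun j => if j == i then x else v j]
      + p [ffun j => if j == i then y else v j].

(* X^{(.)l} p : entry (i,k) is the sum over index paths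
   i = j_0, j_1, ..., j_l = k of p(X_{j_0 j_1}, ..., X_{j_{l-1} j_l});
   for l = 0 this is I_n p_0. *)
Definition ncpow n (X : 'M[M]_n) (l : nat) (p : {ffun 'I_l -> M} -> N)
  : 'M[N]_n :=
  \matrix_(i, k)
    \sum_(j : {ffun 'I_l.+1 -> 'I_n} | (j ord0 == i) && (j ord_max == k))
      p [ffun r : 'I_l => X (j (widen_ord (leqnSn l) r)) (j (lift ord0 r))].

End NC.

Section NC2.
Variables (K : fieldType) (M N : lmodType K).

Definition nc_function (f : forall n, 'M[M]_n -> 'M[N]_n) : Prop :=
  (forall n m (X : 'M[M]_n) (Y : 'M[M]_m),
      f (n + m)%N (block_mx X 0 0 Y) = block_mx (f n X) 0 0 (f m Y)) /\
  (forall n (S : 'M[K]_n) (X : 'M[M]_n), S \in unitmx ->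
      f n (ractmx (lactmx S X) (invmx S))
      = ractmx (lactmx S (f n X)) (invmx S)).

Definition slice_poly_deg_le (f : forall n, 'M[M]_n -> 'M[N]_n) (n L : nat)
  : Prop :=
  forall Y Z : 'M[M]_n, exists c : 'I_L.+1 -> 'M[N]_n,
    forall t : K, f n (Y + scalemx t Z) = \sum_(i < L.+1) scalemx (t ^+ i) (c i).

End NC2.

From Pilot Require Import Defs.
From HB Require Import structures.
From mathcomp Require Import all_boot all_order all_algebra.
Set Implicit Arguments. Unset Strict Implicit. Unset Printing Implicit Defensive.
Import GRing.Theory.
Local Open Scope ring_scope.

(* Write p_l(v) for the (0, l) entry of f at the (l+1) x (l+1) matrix with
   v_1, ..., v_l on its superdiagonal.  The nc axioms give f(A) Q = Q f(B)
   whenever A Q = Q B for a scalar matrix Q, and the whole argument consists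
   of such intertwinings.  Doubling the superdiagonal path at one step shows
   that p_l is multilinear.  Given X and s != 0, let C(s) be the matrix of
   B + 2 blocks with X on the block superdiagonal and s X in the last diagonal
   block.  Unfolding C(s) into a forest of chains, one per index path, shows
   that block (0, r) of f(C(s)) is X^(r) p_r for r <= B.  A diagonal conjugate
   of C(s) has block rows summing to s X, so
   f(s X) = sum_(r <= B) s^r X^(r) p_r + s^(B+1) f(C(s))_(0, B+1),
   where both f(s X) and f(C(s)) are polynomials of degree <= B in s.  As K is
   infinite, comparing coefficients and setting s = 1 gives the expansion. *)

Section ScalarAction.
Variables (K : fieldType) (V : lmodType K).

Definition lmulmx m n p (S : 'M[K]_(m, n)) (X : 'M[V]_(n, p)) : 'M[V]_(m, p) :=
  \matrix_(i, j) \sum_k S i k *: X k j.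
Definition rmulmx m n p (X : 'M[V]_(m, n)) (S : 'M[K]_(n, p)) : 'M[V]_(m, p) :=
  \matrix_(i, j) \sum_k S k j *: X i k.

Lemma rmulmxA m n p q (X : 'M[V]_(m, n)) (S : 'M[K]_(n, p)) (T : 'M[K]_(p, q)) :
  rmulmx (rmulmx X S) T = rmulmx X (S *m T).
Proof.
apply/matrixP=> i j; rewrite !mxE.
under eq_bigr do rewrite mxE scaler_sumr.
rewrite exchange_big; apply: eq_bigr => l _; rewrite mxE scaler_suml.
by apply: eq_bigr => k _; rewrite scalerA mulrC.
Qed.

Lemma lmul1mx m n (X : 'M[V]_(m, n)) : lmulmx 1%:M X = X.
Proof.
apply/matrixP=> i j; rewrite mxE (bigD1 i) //= big1 ?addr0 => [|k Hk].
  by rewrite mxE eqxx scale1r.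
by rewrite mxE eq_sym (negbTE Hk) scale0r.
Qed.

Lemma rmulmx1 m n (X : 'M[V]_(m, n)) : rmulmx X 1%:M = X.
Proof.
apply/matrixP=> i j; rewrite mxE (bigD1 j) //= big1 ?addr0 => [|k Hk].
  by rewrite mxE eqxx scale1r.
by rewrite mxE (negbTE Hk) scale0r.
Qed.

Lemma lmul0mx m n p (X : 'M[V]_(n, p)) : lmulmx (0 : 'M[K]_(m, n)) X = 0.
Proof. by apply/matrixP=> i j; rewrite !mxE big1 // => k _; rewrite mxE scale0r. Qed.

Lemma lmulmx0 m n p (S : 'M[K]_(m, n)) : lmulmx S (0 : 'M[V]_(n, p)) = 0.
Proof. by apply/matrixP=> i j; rewrite !mxE big1 // => k _; rewrite mxE scaler0. Qed.

Lemma rmulmx0 m n p (X : 'M[V]_(m, n)) : rmulmx X (0 : 'M[K]_(n, p)) = 0.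
Proof. by apply/matrixP=> i j; rewrite !mxE big1 // => k _; rewrite mxE scale0r. Qed.

Lemma rmul0mx m n p (S : 'M[K]_(n, p)) : rmulmx (0 : 'M[V]_(m, n)) S = 0.
Proof. by apply/matrixP=> i j; rewrite !mxE big1 // => k _; rewrite mxE scaler0. Qed.

Lemma lmulmx_block m1 m2 n1 n2 p1 p2
  (S11 : 'M[K]_(m1, n1)) (S12 : 'M[K]_(m1, n2))
  (S21 : 'M[K]_(m2, n1)) (S22 : 'M[K]_(m2, n2))
  (X11 : 'M[V]_(n1, p1)) (X12 : 'M[V]_(n1, p2))
  (X21 : 'M[V]_(n2, p1)) (X22 : 'M[V]_(n2, p2)) :
  lmulmx (block_mx S11 S12 S21 S22) (block_mx X11 X12 X21 X22) =
  block_mx (lmulmx S11 X11 + lmulmx S12 X21) (lmulmx S11 X12 + lmulmx S12 X22)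
           (lmulmx S21 X11 + lmulmx S22 X21) (lmulmx S21 X12 + lmulmx S22 X22).
Proof.
apply/matrixP=> i j; rewrite -(splitK i) -(splitK j).
case: (split i) => i'; case: (split j) => j' /=;
rewrite mxE big_split_ord /= ?block_mxEul ?block_mxEur ?block_mxEdl ?block_mxEdr !mxE;
by congr (_ + _); apply: eq_bigr => k _;
   rewrite ?block_mxEul ?block_mxEur ?block_mxEdl ?block_mxEdr.
Qed.

Lemma rmulmx_block m1 m2 n1 n2 p1 p2
  (S11 : 'M[K]_(n1, p1)) (S12 : 'M[K]_(n1, p2))
  (S21 : 'M[K]_(n2, p1)) (S22 : 'M[K]_(n2, p2))
  (X11 : 'M[V]_(m1, n1)) (X12 : 'M[V]_(m1, n2))
  (X21 : 'M[V]_(m2, n1)) (X22 : 'M[V]_(m2, n2)) :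
  rmulmx (block_mx X11 X12 X21 X22) (block_mx S11 S12 S21 S22) =
  block_mx (rmulmx X11 S11 + rmulmx X12 S21) (rmulmx X11 S12 + rmulmx X12 S22)
           (rmulmx X21 S11 + rmulmx X22 S21) (rmulmx X21 S12 + rmulmx X22 S22).
Proof.
apply/matrixP=> i j; rewrite -(splitK i) -(splitK j).
case: (split i) => i'; case: (split j) => j' /=;
rewrite mxE big_split_ord /= ?block_mxEul ?block_mxEur ?block_mxEdl ?block_mxEdr !mxE;
by congr (_ + _); apply: eq_bigr => k _;
   rewrite ?block_mxEul ?block_mxEur ?block_mxEdl ?block_mxEdr.
Qed.

Definition mxblock_simpl :=
  (lmulmx_block, rmulmx_block, lmul1mx, rmulmx1, lmul0mx, lmulmx0, rmulmx0,
   rmul0mx, addr0, add0r).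

End ScalarAction.

Section Intertwining.
Variables (K : fieldType) (M N : lmodType K).
Variable f : forall n, 'M[M]_n -> 'M[N]_n.
Hypothesis f_nc : nc_function f.

(* Conjugation by [[1, Q], [0, 1]] fixes diag(A, B) exactly when A Q = Q B. *)
Lemma nc_intertwine n m (A : 'M[M]_n) (B : 'M[M]_m) (Q : 'M[K]_(n, m)) :
  rmulmx A Q = lmulmx Q B -> rmulmx (f A) Q = lmulmx Q (f B).
Proof.
move=> AQ_QB.
pose S : 'M[K]_(n + m) := block_mx 1%:M Q 0 1%:M.
pose S' : 'M[K]_(n + m) := block_mx 1%:M (- Q) 0 1%:M.
have SS' : S *m S' = 1%:M.
  rewrite mulmx_block !mulmx1 !mul1mx !mul0mx !mulmx0 !addr0 add0r addNr.
  by rewrite -scalar_mx_block.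
have S'S : S' *m S = 1%:M by apply: mulmx1C.
have [S_unit _] := mulmx1_unit SS'.
have invS : invmx S = S' by rewrite -[invmx S]mulmx1 -SS' mulmxA mulVmx ?mul1mx.
have S_comm : lmulmx S (block_mx A 0 0 B) = rmulmx (block_mx A 0 0 B) S.
  by rewrite !mxblock_simpl AQ_QB.
have := f_nc.2 (n + m) S (block_mx A 0 0 B) S_unit.
rewrite invS /lactmx /ractmx -/(lmulmx S _) -/(rmulmx _ S') S_comm rmulmxA SS'.
rewrite rmulmx1 -/(lmulmx S _) -/(rmulmx _ S') f_nc.1 => fS_comm.
have : rmulmx (block_mx (f A) 0 0 (f B)) S = lmulmx S (block_mx (f A) 0 0 (f B)).
  by rewrite {1}fS_comm rmulmxA S'S rmulmx1.
by rewrite !mxblock_simpl => /eq_block_mx [_ -> _ _].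
Qed.

End Intertwining.

Section BigDelta.
Variables (K : fieldType) (V : lmodType K).

Lemma sum_enum_val (T : finType) (F : T -> V) :
  \sum_(k < #|T|) F (enum_val k) = \sum_y F y.
Proof. by rewrite (reindex (@enum_val T _) (onW_bij _ (@enum_val_bij T))). Qed.

Lemma sum_pairE (A B : finType) (F : A * B -> V) :
  \sum_y F y = \sum_a \sum_b F (a, b).
Proof. by rewrite pair_big; apply: eq_bigr => [[]]. Qed.

Lemma big_deltaZl (T : finType) (a : T) (F : T -> V) :
  \sum_k ((k == a)%:R : K) *: F k = F a.
Proof.
rewrite (bigD1 a) //= eqxx scale1r big1 ?addr0 // => k /negbTE ->.
by rewrite scale0r.
Qed.

Lemma big_deltaZr (T : finType) (a : T) (F : T -> V) :
  \sum_k ((a == k)%:R : K) *: F k = F a.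
Proof. by under eq_bigr do rewrite eq_sym; apply: big_deltaZl. Qed.

Lemma big_supportZ (T : finType) (c : T -> K) (F : T -> V) (u : T) :
  (forall y, y != u -> c y = 0) -> \sum_y c y *: F y = c u *: F u.
Proof.
move=> c_supp; rewrite (bigD1 u) //= big1 ?addr0 // => y yu.
by rewrite c_supp ?scale0r.
Qed.

Lemma scale_boolr (b : bool) (v : V) : (b%:R : K) *: v = if b then v else 0.
Proof. by case: b; rewrite ?scale1r ?scale0r. Qed.

End BigDelta.

Section FinIndexed.
Variables (K : fieldType) (M N : lmodType K).
Variable f : forall n, 'M[M]_n -> 'M[N]_n.
Hypothesis f_nc : nc_function f.

Definition enum_mx (V : Type) (T : finType) (A : T -> T -> V) : 'M[V]_#|T| :=
  \matrix_(i, j) A (enum_val i) (enum_val j).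

Definition nc_on (T : finType) (A : T -> T -> M) : T -> T -> N :=
  fun x y => f (enum_mx A) (enum_rank x) (enum_rank y).

Lemma eq_nc_on (T : finType) (A A' : T -> T -> M) :
  (forall x y, A x y = A' x y) -> forall x y, nc_on A x y = nc_on A' x y.
Proof.
move=> eqA x y; rewrite /nc_on; congr (f _ _ _).
by apply/matrixP=> i j; rewrite !mxE eqA.
Qed.

Lemma nc_on_intertwine (T U : finType) (A : T -> T -> M) (B : U -> U -> M)
    (Q : T -> U -> K) :
  (forall x u, \sum_y Q y u *: A x y = \sum_v Q x v *: B v u) ->
  forall x u, \sum_y Q y u *: nc_on A x y = \sum_v Q x v *: nc_on B v u.
Proof.
move=> AQ_QB x u.
pose Q' : 'M[K]_(#|T|, #|U|) := \matrix_(i, j) Q (enum_val i) (enum_val j).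
have : rmulmx (f (enum_mx A)) Q' = lmulmx Q' (f (enum_mx B)).
  apply: (nc_intertwine f_nc); apply/matrixP=> i j; rewrite !mxE.
  under eq_bigr do rewrite !mxE.
  under [RHS]eq_bigr do rewrite !mxE.
  by rewrite (sum_enum_val (fun y => Q y (enum_val j) *: A (enum_val i) y))
             (sum_enum_val (fun v => Q (enum_val i) v *: B v (enum_val j))).
move/matrixP/(_ (enum_rank x) (enum_rank u)); rewrite !mxE.
under eq_bigr do rewrite !mxE.
under [in RHS]eq_bigr do rewrite !mxE.
rewrite !enum_rankK => e.
rewrite -(sum_enum_val (fun y => Q y u *: nc_on A x y)).
rewrite -(sum_enum_val (fun v => Q x v *: nc_on B v u)) /nc_on.
by under eq_bigr do rewrite enum_valK; under [RHS]eq_bigr do rewrite enum_valK.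
Qed.

Lemma nc_on_ord n (X : 'M[M]_n) (i j : 'I_n) :
  nc_on (fun a b => X a b) i j = f X i j.
Proof.
pose Q' : 'M[K]_(#|'I_n|, n) := \matrix_(i, j) ((enum_val i == j)%:R : K).
have : rmulmx (f (enum_mx (fun a b => X a b))) Q' = lmulmx Q' (f X).
  apply: (nc_intertwine f_nc); apply/matrixP=> a b; rewrite !mxE.
  under eq_bigr do rewrite !mxE.
  under [RHS]eq_bigr do rewrite !mxE.
  rewrite (sum_enum_val (fun y => ((y == b)%:R : K) *: X (enum_val a) y)).
  by rewrite big_deltaZl big_deltaZr.
move/matrixP/(_ (enum_rank i) j); rewrite !mxE.
under eq_bigr do rewrite !mxE.
under [in RHS]eq_bigr do rewrite !mxE.
rewrite enum_rankK big_deltaZr => <-.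
set g := f _; rewrite /nc_on -/g.
under eq_bigr => k _ do rewrite -[in g _ k](enum_valK k).
by rewrite (sum_enum_val (fun y => ((y == j)%:R : K) *: g (enum_rank i) (enum_rank y)))
           big_deltaZl.
Qed.

Lemma nc_on_slice (Ldeg : nat -> nat) (B : nat) :
    (forall n, (0 < n)%N -> slice_poly_deg_le f n (Ldeg n)) ->
    (forall n, (0 < n)%N -> (Ldeg n <= B)%N) ->
  forall T : finType, (0 < #|T|)%N -> forall Y Z : T -> T -> M,
  exists c : 'I_B.+1 -> T -> T -> N, forall t x y,
    nc_on (fun a b => Y a b + t *: Z a b) x y = \sum_(i < B.+1) t ^+ i *: c i x y.
Proof.
move=> f_slices Ldeg_le T T_gt0 Y Z.
have [c Hc] := f_slices _ T_gt0 (enum_mx Y) (enum_mx Z).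
pose d (i : nat) x y := c (inord i) (enum_rank x) (enum_rank y).
exists (fun i x y => if (i < (Ldeg #|T|).+1)%N then d i x y else 0) => t x y.
rewrite /nc_on.
have -> : enum_mx (fun a b => Y a b + t *: Z a b) = enum_mx Y + Defs.scalemx t (enum_mx Z).
  by apply/matrixP=> i j; rewrite !mxE.
rewrite Hc summxE.
under eq_bigr => i _ do rewrite mxE -[in c i](inord_val i) -/(d i x y).
rewrite (big_ord_widen B.+1 (fun i => t ^+ i *: d i x y)) ?ltnS ?Ldeg_le //.
by rewrite big_mkcond /=; apply: eq_bigr => i _; case: ifP; rewrite ?scaler0.
Qed.

End FinIndexed.

Section VanishingPoly.
Variables (K : fieldType) (V : lmodType K).
Hypothesis K_infinite : forall s : seq K, exists x : K, x \notin s.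

Lemma avoiding_uniq_seq (s : seq K) d :
  exists w : seq K, [/\ size w = d, uniq w & all (fun x => x \notin s) w].
Proof.
elim: d => [|d [w [w_size w_uniq w_avoid]]]; first by exists [::].
have [x] := K_infinite (w ++ s); rewrite mem_cat negb_or => /andP [xw xs].
by exists (x :: w); rewrite /= w_size xw w_uniq xs w_avoid.
Qed.

Lemma vanishing_poly_coef0 d (a : 'I_d -> V) (s : seq K) :
  (forall t, t \notin s -> \sum_(i < d) t ^+ i *: a i = 0) -> forall i, a i = 0.
Proof.
move=> a_vanish k.
have [w [w_size w_uniq w_avoid]] := avoiding_uniq_seq s d.
pose W : 'M[K]_d := Vandermonde d (\row_j w`_j).
have W_unit : W \in unitmx.
  rewrite unitmxE det_Vandermonde unitfE; apply/prodf_neq0 => i _.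
  apply/prodf_neq0 => j ij; rewrite !mxE subr_eq0 nth_uniq ?w_size //.
  by apply/eqP => /val_inj ji; move: ij; rewrite ji ltnn.
have W_a : forall j, \sum_i W i j *: a i = 0.
  move=> j; rewrite -[RHS](a_vanish w`_j); last by apply: (allP w_avoid); rewrite mem_nth ?w_size.
  by apply: eq_bigr => i _; rewrite !mxE.
have <- : \sum_i (W *m invmx W) i k *: a i = a k.
  by rewrite mulmxV // (big_supportZ _ (u := k)) => [|i /negbTE ik];
     rewrite mxE ?eqxx ?scale1r // ik.
under eq_bigr do rewrite mxE scaler_suml.
rewrite exchange_big big1 // => j _.
under eq_bigr do rewrite mulrC -scalerA.
by rewrite -scaler_sumr W_a scaler0.
Qed.

End VanishingPoly.

Section Coefficients.
Variables (K : fieldType) (M N : lmodType K).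
Variable f : forall n, 'M[M]_n -> 'M[N]_n.
Hypothesis f_nc : nc_function f.

Definition vget l (v : {ffun 'I_l -> M}) (p : nat) : M := oapp v 0 (insub p).

Definition shift_mx l (v : {ffun 'I_l -> M}) : 'M[M]_l.+1 :=
  \matrix_(a, b) if (a.+1 == b :> nat) then vget v a else 0.

Definition nc_coef l (v : {ffun 'I_l -> M}) : N := f (shift_mx v) ord0 ord_max.

Section Multilinear.
Variables (l : nat) (i : 'I_l) (v : {ffun 'I_l -> M}) (x y : M).

Definition upd_comb (al be : K) : {ffun 'I_l -> M} :=
  [ffun j => if j == i then al *: x + be *: y else v j].

(* Two copies of the path 0 -> 1 -> ... -> l, carrying x (on [true]) and y
   (on [false]) at step i; they share v before i and only the [true] copy
   continues after i. *)
Definition split_mx (s t : 'I_l.+1 * bool) : M :=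
  if s.1.+1 == t.1 :> nat then
    if (s.1 < i)%N then (if s.2 == t.2 then vget v s.1 else 0)
    else if s.1 == i :> nat then (if t.2 then (if s.2 then x else y) else 0)
    else (if s.2 && t.2 then vget v s.1 else 0)
  else 0.

Definition split_weight (al be : K) (q : 'I_l.+1) (b : bool) : K :=
  if (q <= i)%N then (if b then al else be) else b%:R.

Lemma vget_upd_comb al be p :
  vget (upd_comb al be) p = if p == i :> nat then al *: x + be *: y else vget v p.
Proof.
rewrite /vget; case: (insubP 'I_l p) => [j _ <-|p_ge] /=; first by rewrite ffunE.
by case: eqP => // p_i; move: p_ge; rewrite p_i ltn_ord.
Qed.

Lemma shift_mx_split_intertwine al be p u :
  \sum_q ((q == u.1)%:R * split_weight al be u.1 u.2) *: shift_mx (upd_comb al be) p q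
  = \sum_w ((p == w.1)%:R * split_weight al be w.1 w.2) *: split_mx w u.
Proof.
case: u => q b /=.
under eq_bigr do rewrite mulrC -scalerA.
rewrite -scaler_sumr big_deltaZl sum_pairE /=.
under [RHS]eq_bigr do (under eq_bigr do rewrite -scalerA; rewrite -scaler_sumr).
rewrite big_deltaZr big_bool /= /shift_mx mxE /split_mx /= vget_upd_comb.
rewrite /split_weight; case: eqP => [<-|]; last by rewrite !scaler0 addr0.
by case: (ltngtP p i) => _; case: b;
  rewrite /= ?scale1r ?scale0r ?scaler0 ?addr0 ?add0r ?scalerDr.
Qed.

Lemma nc_coef_upd_comb al be :
  nc_coef (upd_comb al be) = al *: nc_on f split_mx (ord0, true) (ord_max, true)
                             + be *: nc_on f split_mx (ord0, false) (ord_max, true).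
Proof.
have := nc_on_intertwine f_nc (shift_mx_split_intertwine al be) ord0 (ord_max, true).
under eq_bigr do rewrite mulrC -scalerA.
rewrite -scaler_sumr big_deltaZl sum_pairE /=.
under [RHS]eq_bigr do (under eq_bigr do rewrite -scalerA; rewrite -scaler_sumr).
rewrite big_deltaZr big_bool /= /split_weight /= leqNgt ltn_ord /= scale1r.
by rewrite (nc_on_ord f_nc).
Qed.

End Multilinear.

Lemma nc_coef_multilinear l : multilinear (@nc_coef l).
Proof.
move=> i v a x y.
have -> : [ffun j => if j == i then a *: x + y else v j] = upd_comb i v x y a 1.
  by apply/ffunP => j; rewrite !ffunE scale1r.
have -> : [ffun j => if j == i then x else v j] = upd_comb i v x y 1 0.
  by apply/ffunP => j; rewrite !ffunE scale1r scale0r addr0.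
have -> : [ffun j => if j == i then y else v j] = upd_comb i v x y 0 1.
  by apply/ffunP => j; rewrite !ffunE scale1r scale0r add0r.
by rewrite !nc_coef_upd_comb !scale1r !scale0r addr0 add0r.
Qed.

End Coefficients.

Section PathUnfolding.
Variables (K : fieldType) (M N : lmodType K).
Variable f : forall n, 'M[M]_n -> 'M[N]_n.
Hypothesis f_nc : nc_function f.
Variables (n : nat) (X : 'M[M]_n) (B : nat).

Definition shift_corner (s : K) (a b : 'I_B.+2) : K :=
  (a.+1 == b :> nat)%:R + s * ((a == ord_max) && (b == ord_max))%:R.

Definition kron_shift (s : K) (x y : 'I_B.+2 * 'I_n) : M :=
  shift_corner s x.1 y.1 *: X x.2 y.2.

Section Level.
Variable r : 'I_B.+1.
Let path := {ffun 'I_r.+1 -> 'I_n}.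
Let r_lt : (r.+1 <= B.+2)%N. Proof. exact: leq_trans (ltn_ord r) _. Qed.
Let lvl (m : 'I_r.+1) : 'I_B.+2 := widen_ord r_lt m.

(* The vertex (m, g) sits at position m of the path g; it steps to m + 1
   along any path agreeing with g off m.  This unfolds the first r + 1 block
   levels of [kron_shift s] into a forest indexed by paths. *)
Definition path_mx (x y : 'I_r.+1 * path) : M :=
  if (x.1.+1 == y.1 :> nat) && [forall j, (j != x.1) ==> (x.2 j == y.2 j)]
  then X (x.2 x.1) (y.2 y.1) else 0.

Definition path_end (y : 'I_B.+2 * 'I_n) (u : 'I_r.+1 * path) : K :=
  (y.1 == lvl u.1)%:R * (y.2 == u.2 u.1)%:R.

Lemma lvl_neq_max (m : 'I_r.+1) : (lvl m == ord_max) = false.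
Proof.
apply/negbTE; rewrite -val_eqE /= neq_ltn; apply/orP; left.
by apply: leq_ltn_trans (ltn_ord r); rewrite -ltnS.
Qed.

Lemma path_mx_deltaZ (i : 'I_n) (m' m : 'I_r.+1) (g : path) :
  \sum_(g' : path) ((i == g' m')%:R : K) *: path_mx (m', g') (m, g)
  = (m'.+1 == m :> nat)%:R *: X i (g m).
Proof.
pose g0 : path := [ffun j => if j == m' then i else g j].
rewrite -(big_deltaZl g0 (fun=> (m'.+1 == m :> nat)%:R *: X i (g m))).
apply: eq_bigr => g' _; rewrite /path_mx /=.
case: (g' =P g0) => [->|g'_g0].
  rewrite ffunE eqxx eqxx scale1r.
  have -> : [forall j, (j != m') ==> (g0 j == g j)].
    by apply/forallP => j; apply/implyP => jm; rewrite ffunE (negbTE jm).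
  by rewrite andbT scale1r scale_boolr.
rewrite scale0r; case: (i =P g' m') => [i_g'|]; last by rewrite scale0r.
case: forallP => [g'_g|_]; last by rewrite andbF scaler0.
case: g'_g0; apply/ffunP => j; rewrite ffunE.
case: (j =P m') => [->//|/eqP jm].
by move: (g'_g j); rewrite jm => /eqP.
Qed.

Lemma kron_shift_path_intertwine s x u :
  \sum_y path_end y u *: kron_shift s x y = \sum_v path_end x v *: path_mx v u.
Proof.
case: x => a i; case: u => m g.
rewrite !sum_pairE /path_end /kron_shift /=.
under eq_bigr do under eq_bigr do rewrite -scalerA.
under eq_bigr do rewrite -scaler_sumr big_deltaZl.
rewrite big_deltaZl /shift_corner lvl_neq_max andbF mulr0 addr0.
under [RHS]eq_bigr do under eq_bigr do rewrite -scalerA.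
under [RHS]eq_bigr do rewrite -scaler_sumr path_mx_deltaZ.
case: (ltnP a r.+1) => a_lt.
  rewrite -(big_deltaZl (Ordinal a_lt)
             (fun m' : 'I_r.+1 => (m'.+1 == m :> nat)%:R *: X i (g m))) /=.
  apply: eq_bigr => m' _; congr (_ *: _); congr (_%:R).
  by rewrite -!val_eqE /= eq_sym.
rewrite big1 => [|m' _].
  suff -> : (a.+1 == m :> nat) = false by rewrite scale0r.
  apply/negbTE; rewrite neq_ltn ltnS; apply/orP; right.
  exact: leq_trans (ltnW (ltn_ord m)) a_lt.
suff -> : (a == lvl m') = false by rewrite scale0r.
apply/negbTE; rewrite -val_eqE /= neq_ltn; apply/orP; right.
exact: leq_trans (ltn_ord m') a_lt.
Qed.

Variable pi : path.

Definition chain_mx (a b : 'I_r.+1) : M :=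
  if a.+1 == b :> nat then X (pi a) (pi b) else 0.

Definition tail_weight (j : 'I_r.+1) (u : 'I_r.+1 * path) : K :=
  (j == u.1)%:R * [forall q : 'I_r.+1, (u.1 <= q)%N ==> (u.2 q == pi q)]%:R.

Lemma path_mx_tailZ (x m : 'I_r.+1) (g : path) :
  \sum_(g' : path) ([forall q : 'I_r.+1, (x <= q)%N ==> (g' q == pi q)]%:R : K)
                    *: path_mx (x, g') (m, g)
  = ([forall q : 'I_r.+1, (m <= q)%N ==> (g q == pi q)]%:R : K) *: chain_mx x m.
Proof.
set P := [forall q : 'I_r.+1, _].
pose g0 : path := [ffun q => if q == x then pi x else g q].
rewrite -(big_deltaZl g0 (fun=> (P%:R : K) *: chain_mx x m)).
apply: eq_bigr => g' _; rewrite /path_mx /chain_mx /=.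
case: (g' =P g0) => [->|g'_g0].
  rewrite scale1r.
  have -> : [forall j, (j != x) ==> (g0 j == g j)].
    by apply/forallP => j; apply/implyP => jx; rewrite ffunE (negbTE jx).
  rewrite andbT ffunE eqxx; case: eqP => [xm|_]; last by rewrite !scaler0.
  case: (boolP P) => [/forallP g_pi|g_pi].
    have -> : [forall q : 'I_r.+1, (x <= q)%N ==> (g0 q == pi q)].
      apply/forallP => q; apply/implyP => xq; rewrite ffunE.
      case: (q =P x) => [->//|/eqP qx].
      have mq : (m <= q)%N by rewrite -xm ltn_neqAle xq andbT eq_sym.
      by move: (g_pi q); rewrite mq.
    by move: (g_pi m); rewrite leqnn => /eqP ->.
  suff -> : [forall q : 'I_r.+1, (x <= q)%N ==> (g0 q == pi q)] = false.
    by rewrite !scale0r.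
  apply/negbTE; apply: contra g_pi => /forallP g0_pi.
  apply/forallP => q; apply/implyP => mq.
  have qx : q != x by rewrite -val_eqE /= neq_ltn -ltnS xm mq orbT.
  have xq : (x <= q)%N by rewrite (leq_trans (leqnSn x)) ?xm.
  by move: (g0_pi q); rewrite ffunE (negbTE qx) xq.
rewrite scale0r; case: (boolP [forall q : 'I_r.+1, _]) => g'_pi; last by rewrite scale0r.
case: (boolP [forall j, _]) => g'_g; last by rewrite andbF scaler0.
case: g'_g0; apply/ffunP => j; rewrite ffunE.
case: (j =P x) => [->|/eqP jx].
  by move/forallP: g'_pi => /(_ x); rewrite leqnn => /eqP.
by move/forallP: g'_g => /(_ j); rewrite jx => /eqP.
Qed.

Lemma chain_path_intertwine x u :
  \sum_y tail_weight y u *: chain_mx x y = \sum_v tail_weight x v *: path_mx v u.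
Proof.
case: u => m g; rewrite sum_pairE /tail_weight /=.
under eq_bigr do rewrite mulrC -scalerA.
rewrite -scaler_sumr big_deltaZl.
under [RHS]eq_bigr do under eq_bigr do rewrite -scalerA.
under [RHS]eq_bigr do rewrite -scaler_sumr path_mx_tailZ.
by rewrite big_deltaZr.
Qed.

End Level.

Lemma nc_on_kron_shift_paths s (r : 'I_B.+1) (i k : 'I_n) :
  nc_on f (kron_shift s) (ord0, i) (widen_ord (leqnSn _) r, k)
  = \sum_(g : {ffun 'I_r.+1 -> 'I_n}) ((i == g ord0)%:R : K)
      *: nc_on f (@path_mx r) (ord0, g) (ord_max, [ffun=> k]).
Proof.
have := nc_on_intertwine f_nc (@kron_shift_path_intertwine r s)
          (ord0, i) (ord_max, [ffun=> k]).
rewrite !sum_pairE /path_end /=.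
under eq_bigr do under eq_bigr do rewrite -scalerA.
under eq_bigr do rewrite -scaler_sumr ffunE big_deltaZl.
rewrite big_deltaZl.
under [RHS]eq_bigr do under eq_bigr do rewrite -scalerA.
under [RHS]eq_bigr do rewrite -scaler_sumr.
rewrite (eq_bigr (fun m => ((m == ord0)%:R : K) *:
   \sum_(g : {ffun 'I_r.+1 -> 'I_n}) ((i == g m)%:R : K)
      *: nc_on f (@path_mx r) (m, g) (ord_max, [ffun=> k]))); last first.
  by move=> m _; congr (_%:R *: _); rewrite -!val_eqE /= eq_sym.
rewrite big_deltaZl; set l1 := widen_ord _ _.
by have -> : l1 = widen_ord (leqnSn B.+1) r by apply: val_inj.
Qed.

Lemma chain_mx_shift_mx (r : 'I_B.+1) (pi : {ffun 'I_r.+1 -> 'I_n}) a b :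
  shift_mx [ffun q : 'I_r => X (pi (widen_ord (leqnSn r) q)) (pi (lift ord0 q))] a b
  = chain_mx pi a b.
Proof.
rewrite /shift_mx /chain_mx /vget mxE; case: eqP => // ab.
have a_lt : (a < r)%N by rewrite -ltnS ab.
by rewrite insubT /= ffunE; congr (X (pi _) (pi _)); apply: val_inj.
Qed.

Lemma nc_on_path_chain (r : 'I_B.+1) (pi : {ffun 'I_r.+1 -> 'I_n}) (k : 'I_n) :
  nc_on f (@path_mx r) (ord0, pi) (ord_max, [ffun=> k])
  = ((k == pi ord_max)%:R : K)
    *: nc_coef f [ffun q : 'I_r => X (pi (widen_ord (leqnSn r) q)) (pi (lift ord0 q))].
Proof.
have := nc_on_intertwine f_nc (@chain_path_intertwine r pi) ord0 (ord_max, [ffun=> k]).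
rewrite sum_pairE /tail_weight /=.
under eq_bigr do rewrite mulrC -scalerA.
rewrite -scaler_sumr big_deltaZl.
under [RHS]eq_bigr do under eq_bigr do rewrite -scalerA.
under [RHS]eq_bigr do rewrite -scaler_sumr.
rewrite big_deltaZr (eq_bigr (fun g => ((g == pi)%:R : K) *:
   nc_on f (@path_mx r) (ord0, g) (ord_max, [ffun=> k]))); last first.
  move=> g _; congr ((nat_of_bool _)%:R *: _).
  apply/forallP/eqP => [g_pi|-> q]; last by rewrite eqxx implybT.
  by apply/ffunP => q; apply/eqP/(implyP (g_pi q)).
rewrite big_deltaZl => <-.
have -> : [forall q : 'I_r.+1, (@ord_max r <= q)%N ==> ([ffun=> k] q == pi q)]
          = (k == pi ord_max).
  apply/forallP/idP => [/(_ ord_max)|/eqP -> q]; first by rewrite leqnn ffunE.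
  apply/implyP => q_max; rewrite ffunE; apply/eqP; congr (pi _); apply: val_inj.
  by apply/eqP; rewrite eqn_leq q_max -ltnS ltn_ord.
congr (_ *: _); rewrite -(eq_nc_on f (chain_mx_shift_mx pi)).
exact: nc_on_ord.
Qed.

Lemma nc_on_kron_shift s (r : 'I_B.+1) (i k : 'I_n) :
  nc_on f (kron_shift s) (ord0, i) (widen_ord (leqnSn _) r, k)
  = ncpow X (@nc_coef _ _ _ f r) i k.
Proof.
rewrite nc_on_kron_shift_paths /ncpow mxE [RHS]big_mkcond /=.
apply: eq_bigr => pi _; rewrite nc_on_path_chain !scale_boolr.
by rewrite ![_ == pi _]eq_sym; case: (pi ord0 == i); case: (pi ord_max == k).
Qed.

End PathUnfolding.

Lemma shift_corner1_rowsum (K : fieldType) B (a : 'I_B.+2) :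
  \sum_b shift_corner (1 : K) a b = 1.
Proof.
rewrite /shift_corner big_split /=; case: (a =P ord_max) => [->|a_max].
  rewrite big1 ?add0r => [|b _]; last first.
    by rewrite (_ : (B.+2 == b :> nat) = false) //; apply/negbTE; rewrite eq_sym neq_ltn ltn_ord.
  by rewrite (bigD1 ord_max) //= eqxx mulr1 big1 ?addr0 // => b /negbTE ->; rewrite mulr0.
have a_lt : (a.+1 < B.+2)%N.
  by rewrite ltnS ltn_neqAle -ltnS ltn_ord andbT; apply/eqP => aB; case: a_max; apply: val_inj.
rewrite [X in _ + X]big1 ?addr0 => [|b _]; last by rewrite mulr0.
rewrite (bigD1 (Ordinal a_lt)) //= eqxx big1 ?addr0 // => b b_a.
by case: eqP => // ab; move: b_a; rewrite -val_eqE /= ab eqxx.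
Qed.

Lemma shift_corner_conj (K : fieldType) B (s : K) (a b : 'I_B.+2) : s != 0 ->
  s ^- b * (s * shift_corner 1 a b) = s ^- a * shift_corner s a b.
Proof.
move=> s0; rewrite /shift_corner mul1r.
case: (eqVneq (a.+1 : nat) b) => [ab|ab].
  have -> : (a == ord_max) && (b == ord_max) = false.
    apply/negbTE/negP => /andP [/eqP a_max /eqP b_max].
    by move: ab; rewrite a_max b_max /= => /eqP; rewrite eqn_leq ltnn.
  by rewrite !mulr0 !addr0 !mulr1 -ab exprSr invfM divfK.
by rewrite /= !add0r; case: andP => [[/eqP -> /eqP ->]|_]; rewrite ?mulr0.
Qed.

Section Expansion.
Variables (K : fieldType) (M N : lmodType K).
Hypothesis K_infinite : forall s : seq K, exists x : K, x \notin s.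
Variable f : forall n, 'M[M]_n -> 'M[N]_n.
Hypothesis f_nc : nc_function f.
Variables (Ldeg : nat -> nat) (B : nat).
Hypothesis f_slices : forall n, (0 < n)%N -> slice_poly_deg_le f n (Ldeg n).
Hypothesis Ldeg_le : forall n, (0 < n)%N -> (Ldeg n <= B)%N.
Variables (n : nat) (X : 'M[M]_n).
Hypothesis n_gt0 : (0 < n)%N.

Definition kron_stoch (s : K) (x y : 'I_B.+2 * 'I_n) : M :=
  (s * shift_corner 1 x.1 y.1) *: X x.2 y.2.

(* The rows of [shift_corner 1] sum to 1, so the all-ones block column
   intertwines [kron_stoch s] with [s X]. *)
Lemma nc_on_kron_stoch_rowsum (s : K) (i k : 'I_n) :
  \sum_b nc_on f (kron_stoch s) (ord0, i) (b, k) = nc_on f (fun a b => s *: X a b) i k.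
Proof.
pose Q (y : 'I_B.+2 * 'I_n) (u : 'I_n) : K := (y.2 == u)%:R.
have Q_intertwine x u :
    \sum_y Q y u *: kron_stoch s x y = \sum_v Q x v *: (s *: X v u).
  case: x => [a j]; rewrite sum_pairE big_deltaZr /kron_stoch /=.
  under eq_bigr do rewrite big_deltaZl /=.
  by rewrite -scaler_suml -mulr_sumr shift_corner1_rowsum mulr1.
have := nc_on_intertwine f_nc Q_intertwine (ord0, i) k.
rewrite sum_pairE big_deltaZr => <-.
by apply: eq_bigr => b _; rewrite big_deltaZl.
Qed.

(* [kron_stoch s] is the conjugate of [kron_shift s] by diag(s ^- b). *)
Lemma nc_on_kron_stoch (s : K) (i k : 'I_n) (b : 'I_B.+2) : s != 0 ->
  nc_on f (kron_stoch s) (ord0, i) (b, k) = s ^+ b *: nc_on f (kron_shift X s) (ord0, i) (b, k).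
Proof.
move=> s0.
pose Q (y u : 'I_B.+2 * 'I_n) : K := (y == u)%:R * s ^- y.1.
have Q_off y u : y != u -> Q y u = 0 by move=> /negbTE yu; rewrite /Q yu mul0r.
have Q_intertwine x u :
    \sum_y Q y u *: kron_stoch s x y = \sum_v Q x v *: kron_shift X s v u.
  rewrite (big_supportZ _ (u := u)) => [|y /Q_off //].
  rewrite (big_supportZ _ (u := x)) => [|y]; last by rewrite eq_sym => /Q_off.
  rewrite /Q /kron_stoch /kron_shift !eqxx !mul1r !scalerA.
  by rewrite shift_corner_conj.
have := nc_on_intertwine f_nc Q_intertwine (ord0, i) (b, k).
rewrite (big_supportZ _ (u := (b, k))) => [|y /Q_off //].
rewrite (big_supportZ _ (u := (ord0, i))) => [|y]; last by rewrite eq_sym => /Q_off.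
rewrite /Q /= !eqxx !mul1r expr0 invr1 scale1r => <-.
by rewrite scalerA mulrV ?scale1r // unitfE expf_neq0.
Qed.

Lemma nc_on_scale_expansion (s : K) (i k : 'I_n) : s != 0 ->
  nc_on f (fun a b => s *: X a b) i k
  = \sum_(r < B.+1) s ^+ r *: ncpow X (@nc_coef _ _ _ f r) i k
    + s ^+ B.+1 *: nc_on f (kron_shift (B := B) X s) (ord0, i) (ord_max, k).
Proof.
move=> s0; rewrite -nc_on_kron_stoch_rowsum big_ord_recr /= nc_on_kron_stoch //.
by congr (_ + _); apply: eq_bigr => r _; rewrite nc_on_kron_stoch // (nc_on_kron_shift f_nc).
Qed.

Lemma nc_expansion_entry (i k : 'I_n) :
  f X i k = (\sum_(l < B.+1) ncpow X (@nc_coef _ _ _ f l)) i k.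
Proof.
pose W (l : nat) := ncpow X (@nc_coef _ _ _ f l) i k.
have I_gt0 : (0 < #|'I_n|)%N by rewrite card_ord.
have [d Hd] := nc_on_slice f_slices Ldeg_le I_gt0 (fun _ _ => 0) (fun a b => X a b).
have blocks_gt0 : (0 < #|{: 'I_B.+2 * 'I_n}|)%N by rewrite card_prod !card_ord muln_gt0.
pose corner (x y : 'I_B.+2 * 'I_n) : M :=
  (((x.1 == ord_max) && (y.1 == ord_max))%:R : K) *: X x.2 y.2.
have [c Hc] := nc_on_slice f_slices Ldeg_le blocks_gt0 (kron_shift (B := B) X 0) corner.
pose e (q : 'I_(B.+1 + B.+1)) : N :=
  match split q with
  | inl j => d j i k - W j
  | inr j => - c j (ord0, i) (ord_max, k)
  end.
have e_lshift j : e (lshift _ j) = d j i k - W j by rewrite /e (unsplitK (inl _ j)).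
have e_rshift j : e (rshift _ j) = - c j (ord0, i) (ord_max, k).
  by rewrite /e (unsplitK (inr _ j)).
have e_vanish s : s \notin [:: 0] -> \sum_(q < B.+1 + B.+1) s ^+ q *: e q = 0.
  rewrite inE => s0.
  have := nc_on_scale_expansion i k s0.
  rewrite -(eq_nc_on _ (fun a b => add0r (s *: X a b))) Hd.
  rewrite (eq_nc_on _ (A' := fun a b => kron_shift X 0 a b + s *: corner a b));
    last first.
    by move=> a b; rewrite /kron_shift /shift_corner !mul0r !addr0 scalerA -scalerDl.
  rewrite Hc big_split_ord /= => expansion.
  under eq_bigr do rewrite e_lshift scalerBr.
  under [X in _ + X]eq_bigr do rewrite e_rshift exprD -scalerA scalerN.
  by rewrite sumrB -scaler_sumr sumrN expansion scalerN addrAC addrK subrr.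
have dW j : d j i k = W j.
  by apply/eqP; rewrite -subr_eq0 -e_lshift (vanishing_poly_coef0 K_infinite e_vanish).
rewrite -(nc_on_ord f_nc) (eq_nc_on _ (A' := fun a b => 0 + 1 *: X a b)); last first.
  by move=> a b; rewrite add0r scale1r.
by rewrite Hd summxE; apply: eq_bigr => j _; rewrite expr1n scale1r dW.
Qed.

End Expansion.

Unset Implicit Arguments.

Theorem theorem6p8 (K : fieldType) (M N : lmodType K)
  (K_infinite : forall s : seq K, exists x : K, x \notin s)
  (f : forall n, 'M[M]_n -> 'M[N]_n)
  (f_nc : nc_function f)
  (Ldeg : nat -> nat)
  (f_slices : forall n, (0 < n)%N -> slice_poly_deg_le f n (Ldeg n))
  (L_bounded : exists B : nat, forall n, (0 < n)%N -> (Ldeg n <= B)%N) :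
  exists (L : nat) (p : forall l : nat, {ffun 'I_l -> M} -> N),
    (forall l, (l <= L)%N -> multilinear (p l)) /\
    forall n (X : 'M[M]_n), (0 < n)%N ->
      f n X = \sum_(l < L.+1) ncpow X (p l).
Proof.
have [B Ldeg_le] := L_bounded.
exists B, (fun l => @nc_coef _ _ _ f l); split.
  by move=> l _; apply: nc_coef_multilinear.
move=> n X n_gt0; apply/matrixP => i k.
exact: (nc_expansion_entry K_infinite f_nc f_slices Ldeg_le X n_gt0).
Qed.
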